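(* Let $d\ge1$ and let $\Lambda\subset\mathbb R^d$ be a full-rank lattice with successive minima $\delta_1,\dots,\delta_d$. Then there exists a basis $\boldsymbol v^1,\dots,\boldsymbol v^d$ of $\Lambda$ such that (i) $|\boldsymbol v^s|_2\ll_d\delta_s$ for $s=1,\dots,d$; (ii) $\mathfrak I(\boldsymbol v^s)\subseteq\mathfrak I(\boldsymbol v^{s+1})$ for $s=1,\dots,d-1$.
   Context: For $\boldsymbol v\in\mathbb R^d$, $\mathfrak I(\boldsymbol v):=\{h\in\{1,\dots,d\}: v_h\neq0\}$ is its support. $|\cdot|_2$ is the Euclidean norm. The $s$-th successive minimum of $\Lambda$ is the least $r>0$ such that the Euclidean ball of radius $r$ centred at $0$ contains $s$ linearly independent vectors of $\Lambda$. *)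

From HB Require Import structures.
From mathcomp Require Import all_boot all_order all_algebra.
From mathcomp Require Import classical_sets reals.
Set Implicit Arguments. Unset Strict Implicit. Unset Printing Implicit Defensive.
Import Order.TTheory GRing.Theory Num.Theory.
Local Open Scope ring_scope.
Local Open Scope classical_set_scope.

Definition norm2 (R : realType) (d : nat) (v : 'rV[R]_d) : R :=
  Num.sqrt (\sum_(i < d) v 0 i ^+ 2).

Definition supp (R : realType) (d : nat) (v : 'rV[R]_d) : {set 'I_d} :=
  [set h | v 0 h != 0].

Definition lattice (R : realType) (d : nat) (B : 'M[R]_d) : set 'rV[R]_d :=
  [set x | exists z : 'rV[int]_d, x = map_mx (fun k : int => k%:~R) z *m B].

Definition is_lattice_basis (R : realType) (d : nat) (L : set 'rV[R]_d)
    (V : 'M[R]_d) : Prop :=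
  [/\ forall i : 'I_d, L (row i V),
      row_free V &
      forall x, L x -> exists z : 'rV[int]_d,
        x = map_mx (fun k : int => k%:~R) z *m V].

(* The s-th successive minimum of L: the least r > 0 such that the closed
   ball of radius r around 0 contains s linearly independent vectors of L
   (taken as the infimum of the set of such r, which is attained). *)
Definition succ_min (R : realType) (d : nat) (L : set 'rV[R]_d) (s : nat) : R :=
  inf [set r : R | 0 < r /\
        exists M : 'M[R]_(s, d),
          row_free M /\ forall i : 'I_s, L (row i M) /\ norm2 (row i M) <= r].

From HB Require Import structures.
From mathcomp Require Import all_boot all_order all_algebra.
From mathcomp Require Import boolp classical_sets reals.
From mathcomp Require Import lra zify.
Import Order.TTheory GRing.Theory Num.Theory.
Local Open Scope ring_scope.
Set Implicit Arguments. Unset Strict Implicit. Unset Printing Implicit Defensive.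

(* Nonzero lattice vectors have norm at least
      1 / dual_bound, so the successive minima delta_s are positive; choosing
      greedily, for each s, a row of a family admissible for 2 delta_s outside
      the span of the previous choices gives independent lattice vectors
      w_s = a_s B with |w_s|_1 <= 2 d delta_s and det (a_s) != 0.
   2. A triangular basis.  With G = adj A and D = det A we have y B =
      sum_j ((y G)_j / D) w_j.  For each s, let k_s be the least positive
      value of (y G)_s over the y with (y G)_j = 0 for j > s; a vector y_s
      realising k_s whose earlier coordinates are reduced modulo the k_j has
      all coefficients of modulus <= 1, so |y_s B|_1 <= 2 d^2 delta_(s+1),
      and such triangular vectors always form a basis of Z^d.
   3. Nested supports.  Put z_0 = y_0 and z_(s+1) = y_(s+1) + k z_s with
      0 <= k <= d chosen (pigeonhole) so that no coordinate of z_s B cancels.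
      This keeps the triangular shape, hence the basis property, makes the
      supports increase, and costs a factor d + 1 per step.
   The theorem follows with C = 2 d^2 (d + 1)^(d - 1). *)

Lemma mulmx_comb_coord (R : comNzRingType) m n (y z : 'rV[R]_m)
    (A : 'M[R]_(m, n)) (q : R) j :
  ((y + q *: z) *m A) 0 j = (y *m A) 0 j + q * (z *m A) 0 j.
Proof. by rewrite mulmxDl -scalemxAl !mxE. Qed.

(* For a nonsingular integer matrix A with adjugate G and determinant D,
   y |-> y G embeds Z^d into Z^d with image containing D Z^d (A G = D). *)
Section TriangularIntegerBasis.
Variable n : nat.
Local Notation d := n.+1.
Variable A : 'M[int]_d.
Hypothesis detA_neq0 : \det A != 0.
Local Notation G := (\adj A).
Local Notation D := (\det A).

Definition triangular (s : nat) (y : 'rV[int]_d) : Prop :=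
  forall j : 'I_d, (s < j)%N -> (y *m G) 0 j = 0.

Definition attained (s k : nat) : Prop :=
  exists2 y, triangular s y & (y *m G) 0 (inord s) = k%:Z.

(* inord s never exceeds s (it is 0 when s is out of range). *)
Lemma inord_leq s : (@inord n s <= s)%N.
Proof.
case: (ltnP s d) => [/inordK -> //| le_ds].
exact: leq_trans (ltnW (ltn_ord _)) le_ds.
Qed.

(* The rows of A give |D| as an attained value: row i A *m G = D e_i. *)
Lemma attained_absdet s : attained s `|D|%N.
Proof.
exists (Num.sg D *: row (inord s) A).
  move=> j lt_sj; rewrite -scalemxAl -row_mul mul_mx_adj !mxE.
  have /negbTE -> : (inord s : 'I_d) != j.
    by apply: contraTneq lt_sj => <-; rewrite -leqNgt inord_leq.
  by rewrite !mulr0.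
by rewrite -scalemxAl -row_mul mul_mx_adj !mxE eqxx mulr1n abszE normrEsg.
Qed.

Lemma attained_pos_exists s : exists k, (0 < k)%N && `[< attained s k >].
Proof.
by exists `|D|%N; rewrite absz_gt0 detA_neq0; apply/asboolP/attained_absdet.
Qed.

Definition kmin (s : nat) : nat := ex_minn (attained_pos_exists s).

Lemma kminP s : [/\ (0 < kmin s)%N, attained s (kmin s) &
  forall k, (0 < k)%N -> attained s k -> (kmin s <= k)%N].
Proof.
rewrite /kmin; case: ex_minnP => k /andP [k_gt0 /asboolP k_att] k_min.
by split => // k' k'_gt0 k'_att; apply: k_min; rewrite k'_gt0; apply/asboolP.
Qed.

Lemma kmin_le_absdet s : (kmin s <= `|D|)%N.
Proof.
by have [_ _ ->] := kminP s; rewrite ?absz_gt0 //; exact: attained_absdet.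
Qed.

Lemma kmin_attained s : attained s (kmin s).
Proof. by case: (kminP s). Qed.

Definition kwit (s : nat) : 'rV[int]_d :=
  let: exist2 y _ _ := cid2 (kmin_attained s) in y.

Lemma kwitP s :
  triangular s (kwit s) /\ (kwit s *m G) 0 (inord s) = (kmin s)%:Z.
Proof. by rewrite /kwit; case: cid2. Qed.

Definition reduce_at (s : nat) (y : 'rV[int]_d) : 'rV[int]_d :=
  y + (- divz ((y *m G) 0 (inord s)) (kmin s)%:Z) *: kwit s.

Lemma reduce_at_coord s y (j : 'I_d) :
  (s < j)%N -> (reduce_at s y *m G) 0 j = (y *m G) 0 j.
Proof.
by move=> lt_sj; rewrite mulmx_comb_coord (proj1 (kwitP s)) // mulr0 addr0.
Qed.

Lemma reduce_at_mod s y :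
  (reduce_at s y *m G) 0 (inord s) = modz ((y *m G) 0 (inord s)) (kmin s)%:Z.
Proof.
rewrite mulmx_comb_coord (proj2 (kwitP s)) mulNr.
by rewrite {1}(divz_eq ((y *m G) 0 (inord s)) (kmin s)%:Z) addrAC subrr add0r.
Qed.

Lemma mod_kmin_range s (e : int) :
  0 <= modz e (kmin s)%:Z < (kmin s)%:Z.
Proof.
have [kmin_gt0 _ _] := kminP s.
by rewrite modz_ge0 ?ltz_pmod // ?ltz_nat // eqz_nat -lt0n.
Qed.

(* Every s-triangular y has (y G)_s divisible by k_s: otherwise the reduced
   vector would attain a smaller positive value. *)
Lemma kmin_dvd s y : triangular s y ->
  exists q, (y *m G) 0 (inord s) = q * (kmin s)%:Z.
Proof.
move=> tri_y; set e := (y *m G) 0 (inord s).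
exists (divz e (kmin s)%:Z).
suff mod0 : modz e (kmin s)%:Z = 0.
  by rewrite {1}(divz_eq e (kmin s)%:Z) mod0 addr0.
have [_ _ kmin_min] := kminP s.
have /andP [mod_ge0 mod_lt] := mod_kmin_range s e.
apply/eqP; apply: contraTT mod_lt => mod_neq0.
have : (kmin s <= `|modz e (kmin s)%:Z|)%N.
  apply: kmin_min; first by rewrite absz_gt0.
  exists (reduce_at s y); last by rewrite reduce_at_mod gez0_abs.
  by move=> j lt_sj; rewrite reduce_at_coord // tri_y.
rewrite -lez_nat gez0_abs //; lia.
Qed.

Lemma foldr_reduce_at a b y :
  (forall j : 'I_d, (a + b <= j)%N ->
     (foldr reduce_at y (iota a b) *m G) 0 j = (y *m G) 0 j) /\
  (forall j : 'I_d, (a <= j < a + b)%N ->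
     0 <= (foldr reduce_at y (iota a b) *m G) 0 j < (kmin j)%:Z).
Proof.
elim: b a => [|b IH] a /=.
  split=> // j; rewrite addn0 => /andP [/leq_ltn_trans le_aj /le_aj].
  by rewrite ltnn.
have [IH_high IH_range] := IH a.+1; split=> j.
  by move=> le_j; rewrite reduce_at_coord ?IH_high //; lia.
move=> /andP [le_aj lt_j]; have [eq_aj | lt_aj] := eqVneq (j : nat) a.
  have -> : j = inord a by apply: val_inj; rewrite /= inordK // -eq_aj.
  by rewrite reduce_at_mod inordK -?eq_aj //; exact: mod_kmin_range.
by rewrite reduce_at_coord ?IH_range //; lia.
Qed.

Definition reduced (s : nat) : 'rV[int]_d :=
  foldr reduce_at (kwit s) (iota 0 s).

Lemma reducedP s : (s < d)%N ->
  [/\ triangular s (reduced s), (reduced s *m G) 0 (inord s) = (kmin s)%:Z &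
      forall j : 'I_d, (j < s)%N -> 0 <= (reduced s *m G) 0 j < (kmin j)%:Z].
Proof.
move=> lt_sd; have [high range] := foldr_reduce_at 0 s (kwit s).
have [tri_kwit kwit_s] := kwitP s.
split.
- by move=> j lt_sj; rewrite high ?tri_kwit // ltnW.
- by rewrite high // inordK.
- by move=> j lt_js; apply: range.
Qed.

(* Rows that are triangular and realise the k_s form a basis of Z^d:
   peel off the last nonzero coordinate of y G, which k_s divides. *)
Lemma triangular_rows_span (Z : 'M[int]_d) :
  (forall s : 'I_d,
     triangular s (row s Z) /\ (row s Z *m G) 0 s = (kmin s)%:Z) ->
  forall y : 'rV[int]_d, exists c : 'rV[int]_d, y = c *m Z.
Proof.
move=> rowsZ.
suff span_m m : (m <= d)%N -> forall y : 'rV[int]_d,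
    (forall j : 'I_d, (m <= j)%N -> (y *m G) 0 j = 0) -> exists c, y = c *m Z.
  by move=> y; apply: (span_m d) => // j; rewrite leqNgt ltn_ord.
elim: m => [|m IH] le_md y y_high.
  exists 0; rewrite mul0mx.
  have yG0 : y *m G = 0 by apply/rowP => j; rewrite y_high // mxE.
  have : (y *m G) *m A = D *: y by rewrite -mulmxA mul_adj_mx mul_mx_scalar.
  rewrite yG0 mul0mx => /esym/eqP.
  by rewrite scalemx_eq0 (negbTE detA_neq0) => /eqP.
set i : 'I_d := Ordinal le_md.
have [tri_i Zi] := rowsZ i.
have [q yq] : exists q, (y *m G) 0 i = q * (kmin i)%:Z.
  have := @kmin_dvd m y y_high.
  by have -> : (inord m : 'I_d) = i by apply: val_inj; rewrite /= inordK.
have [c yc] : exists c, y + (- q) *: row i Z = c *m Z.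
  apply: IH (ltnW le_md) _ _ => j le_mj; rewrite mulmx_comb_coord.
  have [->|neq_ji] := eqVneq j i; first by rewrite yq Zi mulNr addrN.
  have lt_mj : (m < j)%N.
    rewrite ltn_neqAle le_mj andbT; apply: contra neq_ji => /eqP eq_mj.
    by apply/eqP/val_inj; rewrite /= eq_mj.
  by rewrite y_high // tri_i // mulr0 addr0.
exists (c + q *: delta_mx 0 i).
by rewrite mulmxDl -scalemxAl -rowE -yc scaleNr addrNK.
Qed.

End TriangularIntegerBasis.

Lemma row_free_rowsub (F : fieldType) m k n (f : 'I_k -> 'I_m)
    (M : 'M[F]_(m, n)) :
  injective f -> row_free M -> row_free (rowsub f M).
Proof.
move=> f_inj free_M; apply: inj_row_free => v.
rewrite rowsubE mulmxA => /eqP; rewrite mulmx_free_eq0 // => /eqP vf0.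
apply/rowP => i; have := congr1 (fun w : 'rV[F]_m => w 0 (f i)) vf0.
rewrite !mxE (bigD1 i) //= big1 ?addr0; first by rewrite !mxE eqxx mulr1.
by move=> k' neq_k'i; rewrite !mxE (inj_eq f_inj) (negbTE neq_k'i) mulr0.
Qed.

Lemma widen_ord_inj m k (le_km : (k <= m)%N) : injective (widen_ord le_km).
Proof. by move=> i j /(congr1 (@nat_of_ord _)) /= eq_ij; apply: val_inj. Qed.

Section RealLattices.
Variable R : realType.
Local Notation imx := (map_mx (fun k : int => k%:~R : R)).

Section Norms.
Variable d : nat.
Implicit Types u v : 'rV[R]_d.

Definition norm1 v : R := \sum_i `|v 0 i|.

Lemma norm1_ge0 v : 0 <= norm1 v.
Proof. by apply: sumr_ge0 => i _. Qed.

Lemma norm2_ge0 v : 0 <= norm2 v.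
Proof. exact: sqrtr_ge0. Qed.

Lemma abs_le_norm2 v i : `|v 0 i| <= norm2 v.
Proof.
rewrite /norm2 -sqrtr_sqr ler_wsqrtr //.
by rewrite (bigD1 i) //= lerDl sumr_ge0 // => j _; rewrite sqr_ge0.
Qed.

Lemma norm2_le_norm1 v : norm2 v <= norm1 v.
Proof.
rewrite /norm2 -(ger0_norm (norm1_ge0 v)) -sqrtr_sqr ler_wsqrtr //.
rewrite /norm1 expr2 big_distrl /=; apply: ler_sum => i _.
rewrite big_distrr /= (bigD1 i) //= -normrM -expr2 ger0_norm ?sqr_ge0 // lerDl.
by apply: sumr_ge0 => j _; rewrite mulr_ge0.
Qed.

Lemma norm1_le_norm2 v : norm1 v <= d%:R * norm2 v.
Proof.
apply: le_trans (_ : \sum_(i < d) norm2 v <= _).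
  by apply: ler_sum => i _; exact: abs_le_norm2.
by rewrite sumr_const card_ord mulr_natl.
Qed.

Lemma norm1D u v : norm1 (u + v) <= norm1 u + norm1 v.
Proof.
rewrite /norm1 -big_split /=; apply: ler_sum => i _.
by rewrite mxE; exact: ler_normD.
Qed.

Lemma norm1Z (c : R) v : norm1 (c *: v) = `|c| * norm1 v.
Proof.
by rewrite /norm1 mulr_sumr; apply: eq_bigr => i _; rewrite mxE normrM.
Qed.

Lemma norm1_sum (I : Type) (r : seq I) (P : pred I) (F : I -> 'rV[R]_d) :
  norm1 (\sum_(i <- r | P i) F i) <= \sum_(i <- r | P i) norm1 (F i).
Proof.
apply: (big_ind2 (fun x y => norm1 x <= y)) => //.
- by rewrite /norm1 big1 // => i _; rewrite mxE normr0.
- by move=> x1 y1 x2 y2 le1 le2; apply: le_trans (norm1D _ _) _; exact: lerD.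
Qed.

End Norms.

Section SupportKeeping.
Variable d : nat.

Definition keeps_support (u v : 'rV[R]_d) (k : nat) : bool :=
  [forall h, (v 0 h != 0) ==> (u 0 h + k%:R * v 0 h != 0)].

(* Pigeonhole: each coordinate in the support of v forbids at most one k,
   so some k in {0, ..., d} is allowed. *)
Lemma keeps_support_exists u v : exists2 k, (k <= d)%N & keeps_support u v k.
Proof.
case: (pickP (fun k : 'I_d.+1 => keeps_support u v k)) => [k good_k | bad].
  by exists k; rewrite // -ltnS.
have bad_coord (k : 'I_d.+1) : exists h : 'I_d,
    (v 0 h != 0) && (u 0 h + (k : nat)%:R * v 0 h == 0).
  move/negbT: (bad k); rewrite /keeps_support negb_forall => /existsP [h].
  by rewrite negb_imply negbK; exists h.
have [f f_bad] := fin_all_exists bad_coord.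
have f_inj : injective f.
  move=> k1 k2 eq_f; move: (f_bad k1) (f_bad k2); rewrite eq_f.
  move=> /andP [v_neq0 /eqP e1] /andP [_ /eqP e2]; apply: val_inj => /=.
  have : ((k1 : nat)%:R - (k2 : nat)%:R) * v 0 (f k2) = 0 :> R.
    rewrite mulrBl; apply/eqP; rewrite subr_eq0.
    by rewrite -(inj_eq (addrI (u 0 (f k2)))) e1 e2.
  by move/eqP; rewrite mulf_eq0 (negbTE v_neq0) orbF subr_eq0 eqr_nat => /eqP.
by have := leq_card f f_inj; rewrite !card_ord ltnn.
Qed.

Definition keep_coeff (u v : 'rV[R]_d) : nat :=
  let: exist2 k _ _ := cid2 (keeps_support_exists u v) in k.

Lemma keep_coeffP u v :
  (keep_coeff u v <= d)%N /\ keeps_support u v (keep_coeff u v).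
Proof. by rewrite /keep_coeff; case: cid2. Qed.

Lemma keeps_support_supp u v k :
  keeps_support u v k -> supp v \subset supp (u + k%:R *: v).
Proof.
move=> /forallP keep; apply/fintype.subsetP => h; rewrite /supp !inE => v_neq0.
by have /implyP/(_ v_neq0) := keep h; rewrite !mxE.
Qed.

End SupportKeeping.

Section LatticeBasics.
Variable d : nat.
Variable B : 'M[R]_d.
Hypothesis unitB : B \in unitmx.
Local Notation L := (lattice B).
Local Open Scope classical_set_scope.

(* Integer coordinates are recovered through B^-1, whence the constant. *)
Definition dual_bound : R := \sum_i \sum_j `|invmx B i j|.

(* Discreteness: a nonzero lattice vector has Euclidean norm at least
   1 / dual_bound, since some integer coordinate has absolute value >= 1. *)
Lemma lattice_norm_lb (z : 'rV[int]_d) :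
  z != 0 -> 1 <= dual_bound * norm2 (imx z *m B).
Proof.
move=> z_neq0; have [j zj_neq0] : exists j, z 0 j != 0.
  apply/existsP; apply: contraNT z_neq0 => /existsPn z0.
  by apply/eqP/rowP => j; rewrite mxE; apply/eqP/negbNE/z0.
set x := imx z *m B.
have zBx : imx z = x *m invmx B by rewrite /x mulmxK.
have : 1 <= `|(imx z) 0 j| by rewrite mxE norm_intr_ge1 ?intr_int ?intr_eq0.
move/le_trans; apply; rewrite zBx mxE.
apply: le_trans (ler_norm_sum _ _ _) _.
apply: le_trans (_ : \sum_i norm2 x * `|invmx B i j| <= _).
  by apply: ler_sum => i _; rewrite normrM ler_wpM2r // abs_le_norm2.
rewrite -mulr_sumr mulrC ler_wpM2r ?norm2_ge0 //.
by apply: ler_sum => i _; rewrite (bigD1 j) //= lerDl sumr_ge0.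
Qed.

Lemma row_in_lattice i : L (row i B).
Proof. by exists (row i 1%:M); rewrite map_row map_mx1 -row_mul mul1mx. Qed.

Lemma lattice_coords m (W : 'M[R]_(m, d)) :
  (forall i, L (row i W)) -> exists Z : 'M[int]_(m, d), W = imx Z *m B.
Proof.
move=> W_in_L; have [z Wz] := fin_all_exists W_in_L.
exists (\matrix_i z i); apply/row_matrixP => i.
by rewrite row_mul -map_row rowK.
Qed.

Lemma int_basis_lattice_basis (Z : 'M[int]_d) :
  (forall y : 'rV[int]_d, exists c : 'rV[int]_d, y = c *m Z) ->
  is_lattice_basis L (imx Z *m B).
Proof.
move=> Z_span; split.
- by move=> i; exists (row i Z); rewrite row_mul map_row.
- have [Y YZ] : exists Y : 'M[int]_d, Y *m Z = 1%:M.
    have [c cZ] := fin_all_exists (fun i => Z_span (delta_mx 0 i)).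
    exists (\matrix_i c i); apply/row_matrixP => i.
    by rewrite row_mul rowK -cZ rowE mulmx1.
  have /mulmx1_unit [_ unitZ] : imx Y *m imx Z = 1%:M.
    by rewrite -map_mxM YZ map_mx1.
  by rewrite row_free_unit unitmx_mul unitZ unitB.
- by move=> x [z ->]; have [c ->] := Z_span z; exists c; rewrite map_mxM mulmxA.
Qed.

Definition admissible (s : nat) : set R := [set r : R | 0 < r /\
  exists M : 'M[R]_(s, d),
    row_free M /\ forall i : 'I_s, L (row i M) /\ norm2 (row i M) <= r].

Lemma succ_minE s : succ_min L s = inf (admissible s).
Proof. by []. Qed.

Lemma admissible_le j s r : (j <= s)%N -> admissible s r -> admissible j r.
Proof.
move=> le_js [r_gt0 [M [free_M M_short]]]; split => //.
exists (rowsub (widen_ord le_js) M); split.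
  by apply: row_free_rowsub => //; exact: widen_ord_inj.
by move=> i; rewrite row_rowsub; exact: M_short.
Qed.

Lemma admissible_neq0 s : (s <= d)%N -> admissible s !=set0.
Proof.
move=> le_sd; exists (1 + \sum_i norm2 (row i B)); split.
  by rewrite ltr_pwDl // sumr_ge0 // => i _; exact: norm2_ge0.
exists (rowsub (widen_ord le_sd) B); split.
  by apply: row_free_rowsub; [exact: widen_ord_inj | rewrite row_free_unit].
move=> i; rewrite row_rowsub; split; first exact: row_in_lattice.
rewrite (bigD1 (widen_ord le_sd i)) //= addrCA lerDl addr_ge0 //.
by apply: sumr_ge0 => k _; exact: norm2_ge0.
Qed.

Lemma admissible_lb s r : (1 <= s)%N -> admissible s r -> 1 <= dual_bound * r.
Proof.
move=> s_gt0 [r_gt0 [M [free_M M_short]]].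
have [[z Mz] Mr] := M_short (Ordinal s_gt0).
have z_neq0 : z != 0.
  apply/negP => /eqP z0; move: Mz; rewrite z0 map_mx0 mul0mx rowE => /eqP.
  rewrite mulmx_free_eq0 // => /eqP /rowP /(_ (Ordinal s_gt0)).
  by rewrite !mxE eqxx /= => /eqP; rewrite oner_eq0.
apply: le_trans (lattice_norm_lb z_neq0) _; rewrite -Mz ler_wpM2l //.
by apply: sumr_ge0 => i _; apply: sumr_ge0.
Qed.

Lemma dual_bound_gt0 : (1 <= d)%N -> 0 < dual_bound.
Proof.
move=> d_gt0; have [r r_adm] := admissible_neq0 d_gt0.
have := admissible_lb (leqnn 1) r_adm.
have dual_ge0 : 0 <= dual_bound by apply: sumr_ge0 => i _; apply: sumr_ge0.
by rewrite lt_def dual_ge0 andbT; apply: contraTneq => ->; rewrite mul0r ler10.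
Qed.

Lemma succ_min_gt0 s : (1 <= s)%N -> (s <= d)%N -> 0 < succ_min L s.
Proof.
move=> s_gt0 le_sd; have dual_gt0 := dual_bound_gt0 (leq_trans s_gt0 le_sd).
apply: lt_le_trans (_ : dual_bound^-1 <= _); first by rewrite invr_gt0.
rewrite succ_minE; apply: lb_le_inf; first exact: admissible_neq0.
move=> r r_adm; rewrite -div1r ler_pdivrMr // mulrC.
exact: admissible_lb r_adm.
Qed.

Lemma succ_min_le j s :
  (j <= s)%N -> (s <= d)%N -> succ_min L j <= succ_min L s.
Proof.
move=> le_js le_sd; rewrite !succ_minE.
apply: lb_le_inf; first exact: admissible_neq0.
move=> r r_adm; apply: ge_inf; last exact: admissible_le r_adm.
by exists 0 => r' [r'_gt0 _]; exact: ltW.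
Qed.

(* Since the infimum is positive, some admissible radius is at most twice it. *)
Lemma succ_min_approx s : (1 <= s)%N -> (s <= d)%N ->
  exists2 r, admissible s r & r <= 2 * succ_min L s.
Proof.
move=> s_gt0 le_sd; have := succ_min_gt0 s_gt0 le_sd.
rewrite succ_minE => inf_gt0.
have : inf (admissible s) < 2 * inf (admissible s) by lra.
move=> /(inf_lt (admissible_neq0 le_sd)) [r r_adm lt_r].
by exists r => //; exact: ltW.
Qed.

(* Greedy choice: s independent lattice vectors w_1, ..., w_s with
   |w_i|_2 <= 2 delta_i; extend by a row of an admissible family for
   delta_(s+1) not in the span of the previous ones. *)
Lemma short_independent_rows s : (s <= d)%N ->
  exists W : 'M[R]_(s, d), row_free W /\
    forall i : 'I_s, L (row i W) /\ norm2 (row i W) <= 2 * succ_min L i.+1.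
Proof.
elim: s => [|s IH] le_sd.
  by exists 0; split; [rewrite -row_leq_rank | case].
have [W [free_W W_short]] := IH (ltnW le_sd).
have [r [r_gt0 [M [free_M M_short]]] le_r] := succ_min_approx (ltn0Sn s) le_sd.
have [i Mi_new] : exists i, ~~ (row i M <= W)%MS.
  apply/existsP; apply: contraFT (ltnn s) => /existsPn M_old.
  have /mxrankS : (M <= W)%MS by apply/row_subP => i; apply/negPn/M_old.
  by move: free_M free_W; rewrite /row_free => /eqP -> /eqP ->.
rewrite -addn1; exists (col_mx W (row i M)); split.
  rewrite -row_leq_rank -addsmxE -{1}(eqP free_W) addn1.
  have [le_rk eq_rk] := mxrank_leqif_sup (addsmxSl W (row i M)).
  by rewrite ltn_neqAle le_rk andbT eq_rk addsmx_sub submx_refl.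
move=> k; case: (splitP k) => [j k_j | k' k_k'].
  have -> : k = lshift 1 j by apply: val_inj.
  by rewrite rowKu; exact: W_short.
have -> : k = rshift s k' by apply: val_inj.
rewrite rowKd row_id /= ord1 addn0; have [Mi_in_L Mi_short] := M_short i.
by split => //; exact: le_trans Mi_short le_r.
Qed.

Lemma short_independent_vectors : exists A : 'M[int]_d, \det A != 0 /\
  forall j : 'I_d, norm1 (row j (imx A *m B)) <= (2 * d)%:R * succ_min L j.+1.
Proof.
have [W [free_W W_short]] := short_independent_rows (leqnn d).
have [A WA] := lattice_coords (fun i => proj1 (W_short i)).
exists A; split.
  have : imx A *m B \in unitmx by rewrite -WA -row_free_unit.
  by rewrite unitmx_mul unitmxE det_map_mx unitfE intr_eq0 => /andP [].
move=> j; rewrite -WA; apply: le_trans (norm1_le_norm2 _) _.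
rewrite natrM (mulrC 2) -mulrA ler_wpM2l //; exact: (proj2 (W_short j)).
Qed.

End LatticeBasics.

Definition basis_const (n : nat) : R := (2 * n.+1 * n.+1)%:R * n.+2%:R ^+ n.

Section NestedBasis.
Variable n : nat.
Local Notation d := n.+1.
Variable B : 'M[R]_d.
Variable A : 'M[int]_d.
Hypothesis detA_neq0 : \det A != 0.
Local Notation G := (\adj A).
Local Notation D := (\det A).

Local Notation lvec y := (imx y *m B).

(* Since G A = D, every lattice vector expands over the rows w_j of A B as
   y B = sum_j ((y G)_j / D) w_j. *)
Lemma lattice_vector_expansion (y : 'rV[int]_d) :
  lvec y = \sum_j ((((y *m G) 0 j)%:~R / D%:~R) *: row j (imx A *m B)).
Proof.
have D_neq0 : (D%:~R : R) != 0 by rewrite intr_eq0.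
have yGA : imx (y *m G) *m imx A = D%:~R *: imx y.
  by rewrite -map_mxM -mulmxA mul_adj_mx mul_mx_scalar map_mxZ.
have -> : imx y = (D%:~R)^-1 *: (imx (y *m G) *m imx A).
  by rewrite yGA scalerA mulVf // scale1r.
rewrite -scalemxAl -mulmxA mulmx_sum_row scaler_sumr.
by apply: eq_bigr => j _; rewrite scalerA mxE mulrC.
Qed.

Lemma norm1_expansion_bound (y : 'rV[int]_d) s :
  triangular A s y ->
  (forall j : 'I_d, (j <= s)%N -> `|(y *m G) 0 j| <= `|D|) ->
  norm1 (lvec y) <= \sum_(j < d | (j <= s)%N) norm1 (row j (imx A *m B)).
Proof.
move=> tri_y y_bounded.
rewrite lattice_vector_expansion (bigID (fun j : 'I_d => (j <= s)%N)) /=.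
rewrite [X in _ + X]big1 ?addr0; last first.
  move=> j; rewrite -ltnNge => lt_sj.
  by rewrite tri_y // mulr0z mul0r scale0r.
apply: le_trans (norm1_sum _ _ _) _; apply: ler_sum => j le_js.
rewrite norm1Z ler_piMl ?norm1_ge0 // normrM normfV -!intr_norm.
by rewrite ler_pdivrMr ?ltr0z ?normr_gt0 // mul1r ler_int y_bounded.
Qed.

Hypothesis unitB : B \in unitmx.
Local Notation L := (lattice B).
Local Notation delta s := (succ_min L s).
Hypothesis short_w :
  forall j : 'I_d, norm1 (row j (imx A *m B)) <= (2 * d)%:R * delta j.+1.

Lemma delta_ge0 s : (s < d)%N -> 0 <= delta s.+1.
Proof. by move=> lt_sd; apply/ltW/(succ_min_gt0 unitB). Qed.

(* The reduced vectors y_s of the triangular basis satisfy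
   |y_s B|_1 <= sum_(j <= s) |w_j|_1 <= 2 d^2 delta_(s+1). *)
Lemma reduced_norm s : (s < d)%N ->
  norm1 (lvec (reduced detA_neq0 s)) <= (2 * d * d)%:R * delta s.+1.
Proof.
move=> lt_sd; have [tri_y y_s y_low] := reducedP detA_neq0 lt_sd.
apply: le_trans (norm1_expansion_bound tri_y _) _.
  move=> j le_js; have [lt_js | eq_js] := ltnP j s.
    have /andP [c_ge0 c_lt] := y_low j lt_js; rewrite ger0_norm //.
    by apply: le_trans (ltW c_lt) _; rewrite -abszE lez_nat kmin_le_absdet.
  have -> : j = inord s.
    by apply: val_inj; rewrite /= inordK //; apply/eqP; rewrite eqn_leq le_js.
  by rewrite y_s -abszE lez_nat kmin_le_absdet.
rewrite big_mkcond /=.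
apply: le_trans (_ : \sum_(j < d) (2 * d)%:R * delta s.+1 <= _).
  apply: ler_sum => j _; case: ifP => [le_js | _].
    by apply: le_trans (short_w j) _; rewrite ler_wpM2l // succ_min_le.
  by rewrite mulr_ge0 ?delta_ge0.
by rewrite sumr_const card_ord -[_ *+ d]mulr_natr mulrAC -natrM.
Qed.

(* z_0 = y_0 and z_(s+1) = y_(s+1) + k z_s, with k in [0, d] chosen so that
   no coordinate in the support of z_s B cancels. *)
Fixpoint nested (s : nat) : 'rV[int]_d :=
  if s is s'.+1 then
    reduced detA_neq0 s +
      (keep_coeff (lvec (reduced detA_neq0 s)) (lvec (nested s')))%:Z
        *: nested s'
  else reduced detA_neq0 0.

Lemma lvec_comb (y z : 'rV[int]_d) (k : nat) :
  lvec (y + k%:Z *: z) = lvec y + k%:R *: lvec z.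
Proof. by rewrite map_mxD map_mxZ mulmxDl -scalemxAl. Qed.

(* Adding a multiple of the (s-1)-triangular z_(s-1) does not disturb the
   triangular shape of y_s. *)
Lemma nested_triangular s : (s < d)%N ->
  triangular A s (nested s) /\
  (nested s *m G) 0 (inord s) = (kmin detA_neq0 s)%:Z.
Proof.
elim: s => [|s IH] lt_sd /=; first by have [] := reducedP detA_neq0 lt_sd.
have [tri_y y_s _] := reducedP detA_neq0 lt_sd.
have [tri_z _] := IH (ltnW lt_sd); split.
  move=> j lt_sj.
  by rewrite mulmx_comb_coord tri_y // tri_z ?mulr0 ?addr0 // ltnW.
by rewrite mulmx_comb_coord y_s tri_z ?mulr0 ?addr0 // inordK.
Qed.

Lemma nested_supp s :
  supp (lvec (nested s)) \subset supp (lvec (nested s.+1)).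
Proof.
rewrite /= lvec_comb; apply: keeps_support_supp; exact: (keep_coeffP _ _).2.
Qed.

(* Each step multiplies the bound by at most d + 1. *)
Lemma nested_norm s : (s < d)%N ->
  norm1 (lvec (nested s)) <= (2 * d * d)%:R * d.+1%:R ^+ s * delta s.+1.
Proof.
elim: s => [|s IH] lt_sd /=; first by rewrite expr0 mulr1; exact: reduced_norm.
have [k_le _] := keep_coeffP (lvec (reduced detA_neq0 s.+1)) (lvec (nested s)).
set k := keep_coeff _ _ in k_le *.
rewrite lvec_comb; apply: le_trans (norm1D _ _) _; rewrite norm1Z normr_nat.
have y_short := reduced_norm lt_sd; have z_short := IH (ltnW lt_sd).
have delta_mono : delta s.+1 <= delta s.+2 by apply: succ_min_le.
rewrite exprS; set P := _ ^+ s in z_short *.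
set c := (2 * d * d)%:R in y_short z_short *.
have delta_s_ge0 := delta_ge0 (ltnW lt_sd).
have P_ge1 : 1 <= P by rewrite exprn_ege1 // ler1n.
have c_ge0 : 0 <= c by [].
have k_bound : k%:R * norm1 (lvec (nested s)) <= d%:R * (c * P * delta s.+2).
  apply: ler_pM; rewrite ?ler0n ?norm1_ge0 ?ler_nat //.
  by apply: le_trans z_short _; rewrite ler_wpM2l // mulr_ge0 //; lra.
have slack : 0 <= (P - 1) * (c * delta s.+2).
  by apply: mulr_ge0; [lra | apply: mulr_ge0 => //; lra].
rewrite -[d.+1%:R]natr1; nra.
Qed.

Local Notation Z := (\matrix_(i < d) nested i).

Lemma row_nested_basis (i : 'I_d) : row i (imx Z *m B) = lvec (nested i).
Proof. by rewrite row_mul -map_row rowK. Qed.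

Lemma nested_basis : exists V : 'M[R]_d,
  [/\ is_lattice_basis L V,
      forall s : 'I_d, norm2 (row s V) <= basis_const n * delta s.+1 &
      forall s t : 'I_d, nat_of_ord t = s.+1 ->
        supp (row s V) \subset supp (row t V)].
Proof.
exists (imx Z *m B); split.
- apply: (int_basis_lattice_basis unitB).
  apply: (@triangular_rows_span _ _ detA_neq0) => s.
  by rewrite rowK; have := nested_triangular (ltn_ord s); rewrite inord_val.
- move=> s; rewrite row_nested_basis; apply: le_trans (norm2_le_norm1 _) _.
  apply: le_trans (nested_norm (ltn_ord s)) _.
  rewrite ler_wpM2r ?delta_ge0 // ler_wpM2l // ler_weXn2l ?ler1n //.
  by rewrite -ltnS.
- by move=> s t t_s; rewrite !row_nested_basis t_s; exact: nested_supp.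
Qed.

End NestedBasis.

End RealLattices.

Unset Implicit Arguments.

(* Indices are 0-based: row s of V is v^(s+1); its bound is delta_(s+1). *)
Theorem mainTheorem7 (R : realType) (d : nat) (hd : (1 <= d)%N) :
  exists C : R, 0 < C /\
  forall B : 'M[R]_d, B \in unitmx ->
  exists V : 'M[R]_d,
    [/\ is_lattice_basis (lattice B) V,
        forall s : 'I_d, norm2 (row s V) <= C * succ_min (lattice B) s.+1 &
        forall s t : 'I_d, nat_of_ord t = s.+1 ->
          supp (row s V) \subset supp (row t V)].
Proof.
case: d hd => [//|n] _.
exists (basis_const R n); split; first by rewrite mulr_gt0 ?exprn_gt0 ?ltr0n.
move=> B unitB; have [A [detA_neq0 short_w]] := short_independent_vectors unitB.
exact: nested_basis detA_neq0 unitB short_w.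
Qed.
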